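(* No distribution $p\in\operatorname{RBM}_{3,2}$ has four modes; that is, there is no $p\in\operatorname{RBM}_{3,2}$ and set $S\subseteq\{0,1\}^3$ of four states such that for every $x\in S$ and every Hamming neighbour $y$ of $x$ one has $p_x>p_y$.
   Context: A distribution of three binary random variables is a $2\times2\times2$ tensor $p=(p_x)_{x\in\{0,1\}^3}$ with nonnegative entries summing to $1$; the set of these is $\Delta_7$. Two states in $\{0,1\}^3$ are Hamming neighbours if they differ in exactly one coordinate. A mode of $p$ is a state $x$ with $p_x>p_y$ for every Hamming neighbour $y$ of $x$. For $a,b,c\in\mathbb{R}^2_{\ge0}$, $a\otimes b\otimes c$ is the tensor with entries $a_ib_jc_k$. $\operatorname{RBM}_{3,2}$ is the set of $p\in\Delta_7$ of the form $p=(a_1\otimes b_1\otimes c_1+d_1\otimes e_1\otimes f_1)*(a_2\otimes b_2\otimes c_2+d_2\otimes e_2\otimes f_2)$ with all vectors in $\mathbb{R}^2_{\ge0}$, where $*$ is the entrywise (Hadamard) product. *)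

From Stdlib Require Import Reals Lra List.
Import ListNotations.
Open Scope R_scope.

(* A state of three binary variables: an element of {0,1}^3 (false = 0, true = 1). *)
Definition state : Type := (bool * bool * bool)%type.

Definition all_states : list state :=
  [ (false,false,false); (false,false,true); (false,true,false); (false,true,true);
    (true,false,false);  (true,false,true);  (true,true,false);  (true,true,true) ].

Definition hdist (x y : state) : nat :=
  let '(x1, x2, x3) := x in
  let '(y1, y2, y3) := y in
  ((if xorb x1 y1 then 1 else 0) + (if xorb x2 y2 then 1 else 0)
   + (if xorb x3 y3 then 1 else 0))%nat.

Definition hamming_nb (x y : state) : Prop := hdist x y = 1%nat.

Definition tensor := state -> R.

Definition in_Delta7 (p : tensor) : Prop :=
  (forall x, 0 <= p x) /\ fold_right Rplus 0 (map p all_states) = 1.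

Definition is_mode (p : tensor) (x : state) : Prop :=
  forall y, hamming_nb x y -> p x > p y.

Definition vsel (v : R * R) (b : bool) : R := if b then snd v else fst v.
Definition nonneg2 (v : R * R) : Prop := 0 <= fst v /\ 0 <= snd v.

Definition tprod3 (a b c : R * R) : tensor :=
  fun x => let '(i, j, k) := x in vsel a i * vsel b j * vsel c k.

Definition RBM32 (p : tensor) : Prop :=
  in_Delta7 p /\
  exists a1 b1 c1 d1 e1 f1 a2 b2 c2 d2 e2 f2 : R * R,
    nonneg2 a1 /\ nonneg2 b1 /\ nonneg2 c1 /\ nonneg2 d1 /\ nonneg2 e1 /\ nonneg2 f1 /\
    nonneg2 a2 /\ nonneg2 b2 /\ nonneg2 c2 /\ nonneg2 d2 /\ nonneg2 e2 /\ nonneg2 f2 /\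
    forall x, p x = (tprod3 a1 b1 c1 x + tprod3 d1 e1 f1 x)
                    * (tprod3 a2 b2 c2 x + tprod3 d2 e2 f2 x).

(* Four modes are pairwise at Hamming distance 2, so they form a parity class
   of the cube.  Then every face of the cube has a strictly signed 2x2
   determinant, with opposite signs on opposite faces.  For a sum of two
   rank-one tensors a⊗b⊗c + d⊗e⊗f the determinant of the face {x3 = k} is
   c_k f_k det(a,d) det(b,e), whose sign does not depend on k; and a Hadamard
   product of nonnegative 2x2 matrices can have positive (negative)
   determinant only if one factor does.  So, with A = det(a1,d1), A' =
   det(a2,d2) etc., the products AB·A'B', AC·A'C' and BC·B'C' are all
   negative, while their product is the square (ABC·A'B'C')^2. *)

From Stdlib Require Import Reals List.
From Stdlib Require Import Lra Lia Bool.
Import ListNotations.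
Open Scope R_scope.

Definition parity (x : state) : bool :=
  let '(x1, x2, x3) := x in xorb (xorb x1 x2) x3.

Definition parity_class (b : bool) : list state :=
  filter (fun x => Bool.eqb (parity x) b) all_states.

Lemma in_all_states (x : state) : In x all_states.
Proof. destruct x as [[[] []] []]; simpl; tauto. Qed.

Lemma in_parity_class (b : bool) (x : state) : parity x = b -> In x (parity_class b).
Proof.
  intros Hx; apply filter_In; split; [apply in_all_states |].
  now rewrite Hx, eqb_reflx.
Qed.

Lemma hdist_sym (x y : state) : hdist x y = hdist y x.
Proof. destruct x as [[[] []] []], y as [[[] []] []]; reflexivity. Qed.

Lemma hdist_eq0 (x y : state) : hdist x y = 0%nat -> x = y.
Proof. destruct x as [[[] []] []], y as [[[] []] []]; easy. Qed.

(* Antipodal states have distance 3, so a third state is adjacent to one of them. *)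
Lemma parity_eq_of_spread (x y z : state) :
  (2 <= hdist x y)%nat -> (2 <= hdist x z)%nat -> (2 <= hdist y z)%nat ->
  parity x = parity y.
Proof.
  destruct x as [[[] []] []], y as [[[] []] []], z as [[[] []] []];
  cbn; intros; first [reflexivity | lia].
Qed.

Lemma parity_class_length (b : bool) : length (parity_class b) = 4%nat.
Proof. now destruct b. Qed.

Lemma NoDup_four_parity_class (S : list state) (b : bool) :
  NoDup S -> length S = 4%nat -> (forall x, In x S -> parity x = b) ->
  forall x, parity x = b -> In x S.
Proof.
  intros HS Hlen HSb x Hx.
  apply in_parity_class in Hx; revert x Hx.
  apply NoDup_length_incl; [exact HS | now rewrite Hlen, parity_class_length |].
  intros y Hy; now apply in_parity_class, HSb.
Qed.

Lemma spread_four_parity_class (S : list state) :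
  NoDup S -> length S = 4%nat ->
  (forall x y, In x S -> In y S -> x <> y -> (2 <= hdist x y)%nat) ->
  exists b, forall x, parity x = b -> In x S.
Proof.
  intros HS Hlen Hspread.
  destruct S as [|x1 [|x2 [|x3 [|x4 [|]]]]]; try discriminate.
  exists (parity x1); apply NoDup_four_parity_class; [assumption..|].
  pose proof HS as HS'.
  apply NoDup_cons_iff in HS' as [H1 HS']; apply NoDup_cons_iff in HS' as [H2 HS'];
    apply NoDup_cons_iff in HS' as [H3 _].
  intros x Hx; symmetry.
  destruct Hx as [<- | [<- | [<- | [<- | []]]]]; [reflexivity | ..];
    [apply (parity_eq_of_spread _ _ x3) | apply (parity_eq_of_spread _ _ x2)
    | apply (parity_eq_of_spread _ _ x2)];
    apply Hspread; simpl; try tauto; intros ->; simpl in *; tauto.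
Qed.

Lemma hamming_nb_sym (x y : state) : hamming_nb x y -> hamming_nb y x.
Proof. unfold hamming_nb; now rewrite hdist_sym. Qed.

Lemma modes_not_adjacent (p : tensor) (x y : state) :
  is_mode p x -> is_mode p y -> ~ hamming_nb x y.
Proof.
  intros Hx Hy Hxy.
  specialize (Hx y Hxy); specialize (Hy x (hamming_nb_sym _ _ Hxy)); lra.
Qed.

Definition det2 (m00 m01 m10 m11 : R) : R := m00 * m11 - m01 * m10.

Definition face_det (p : tensor) (f : bool -> bool -> state) : R :=
  det2 (p (f false false)) (p (f false true)) (p (f true false)) (p (f true true)).

Definition face12 (k i j : bool) : state := (i, j, k).
Definition face13 (k i j : bool) : state := (i, k, j).
Definition face23 (k i j : bool) : state := (k, i, j).

Lemma face_det_ext (p q : tensor) (f : bool -> bool -> state) :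
  (forall x, p x = q x) -> face_det p f = face_det q f.
Proof. intros Hpq; unfold face_det; now rewrite !Hpq. Qed.

Lemma face_det_swap (p : tensor) (f : bool -> bool -> state) :
  face_det p (fun i j => f i (negb j)) = - face_det p f.
Proof. unfold face_det, det2; simpl; ring. Qed.

Lemma face_det_pos_of_modes (p : tensor) (f : bool -> bool -> state) :
  (forall x, 0 <= p x) ->
  is_mode p (f false false) -> is_mode p (f true true) ->
  hamming_nb (f false false) (f false true) -> hamming_nb (f true true) (f true false) ->
  face_det p f > 0.
Proof.
  intros Hp H00 H11 N0 N1; unfold face_det, det2.
  specialize (H00 _ N0); specialize (H11 _ N1).
  pose proof (Hp (f false true)); pose proof (Hp (f true false)); nra.
Qed.

Lemma face_det_neg_of_modes (p : tensor) (f : bool -> bool -> state) :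
  (forall x, 0 <= p x) ->
  is_mode p (f false true) -> is_mode p (f true false) ->
  hamming_nb (f false true) (f false false) -> hamming_nb (f true false) (f true true) ->
  face_det p f < 0.
Proof.
  intros Hp H01 H10 N0 N1.
  enough (face_det p (fun i j => f i (negb j)) > 0) by (rewrite face_det_swap in *; lra).
  now apply face_det_pos_of_modes.
Qed.

Lemma opposite_face_dets_of_parity_modes (p : tensor) (b : bool)
    (F : bool -> bool -> bool -> state) :
  (forall x, 0 <= p x) ->
  (forall x, parity x = b -> is_mode p x) ->
  (forall k i j, parity (F k i j) = xorb k (xorb i j)) ->
  (forall k i j, hamming_nb (F k i j) (F k i (negb j))) ->
  face_det p (F false) * face_det p (F true) < 0.
Proof.
  intros Hp Hmodes Hpar Hnb.
  assert (Hmode : forall k i j, xorb k (xorb i j) = b -> is_mode p (F k i j))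
    by (intros k i j Hkij; apply Hmodes; now rewrite Hpar).
  destruct b; [apply Rmult_neg_pos | apply Rmult_pos_neg];
    first [ apply face_det_pos_of_modes | apply face_det_neg_of_modes ];
    auto; apply Hmode; reflexivity.
Qed.

Lemma det2_hadamard_pos (q00 q01 q10 q11 r00 r01 r10 r11 : R) :
  0 <= q00 -> 0 <= q11 -> 0 <= r00 -> 0 <= r11 ->
  det2 (q00 * r00) (q01 * r01) (q10 * r10) (q11 * r11) > 0 ->
  det2 q00 q01 q10 q11 > 0 \/ det2 r00 r01 r10 r11 > 0.
Proof.
  unfold det2; intros.
  destruct (Rlt_or_le 0 (q00 * q11 - q01 * q10)) as [|Hq]; [now left|].
  destruct (Rlt_or_le 0 (r00 * r11 - r01 * r10)) as [|Hr]; [now right|].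
  exfalso.
  assert (q00 * q11 * (r00 * r11) <= q01 * q10 * (r01 * r10)).
  { apply Rmult_le_compat; try lra; apply Rmult_le_pos; assumption. }
  nra.
Qed.

Lemma face_det_hadamard_pos (q r : tensor) (f : bool -> bool -> state) :
  (forall x, 0 <= q x) -> (forall x, 0 <= r x) ->
  face_det (fun x => q x * r x) f > 0 -> face_det q f > 0 \/ face_det r f > 0.
Proof. intros Hq Hr; apply det2_hadamard_pos; auto. Qed.

Lemma face_det_hadamard_neg (q r : tensor) (f : bool -> bool -> state) :
  (forall x, 0 <= q x) -> (forall x, 0 <= r x) ->
  face_det (fun x => q x * r x) f < 0 -> face_det q f < 0 \/ face_det r f < 0.
Proof.
  intros Hq Hr Hqr.
  destruct (face_det_hadamard_pos q r (fun i j => f i (negb j)) Hq Hr);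
    rewrite !face_det_swap in *; lra.
Qed.

Lemma pos_of_nonneg_mul (s X : R) : 0 <= s -> s * X > 0 -> X > 0.
Proof. intros; nra. Qed.

Lemma neg_of_nonneg_mul (s X : R) : 0 <= s -> s * X < 0 -> X < 0.
Proof. intros; nra. Qed.

Lemma hadamard_opposite_faces (q r : tensor) (F : bool -> bool -> bool -> state)
    (s t : bool -> R) (X Y : R) :
  (forall x, 0 <= q x) -> (forall x, 0 <= r x) ->
  (forall k, 0 <= s k) -> (forall k, 0 <= t k) ->
  (forall k, face_det q (F k) = s k * X) -> (forall k, face_det r (F k) = t k * Y) ->
  face_det (fun x => q x * r x) (F false) * face_det (fun x => q x * r x) (F true) < 0 ->
  X * Y < 0.
Proof.
  intros Hq Hr Hs Ht HqF HrF Hopp.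
  assert (Hsigns : forall k k', face_det (fun x => q x * r x) (F k) > 0 ->
                     face_det (fun x => q x * r x) (F k') < 0 -> X * Y < 0).
  { intros k k' Hpos Hneg.
    assert (X > 0 \/ Y > 0) as Hpos'.
    { destruct (face_det_hadamard_pos _ _ _ Hq Hr Hpos) as [Hdet | Hdet];
        [left; rewrite HqF in Hdet; apply (pos_of_nonneg_mul (s k))
        | right; rewrite HrF in Hdet; apply (pos_of_nonneg_mul (t k))]; auto. }
    assert (X < 0 \/ Y < 0) as Hneg'.
    { destruct (face_det_hadamard_neg _ _ _ Hq Hr Hneg) as [Hdet | Hdet];
        [left; rewrite HqF in Hdet; apply (neg_of_nonneg_mul (s k'))
        | right; rewrite HrF in Hdet; apply (neg_of_nonneg_mul (t k'))]; auto. }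
    destruct Hpos', Hneg'; nra. }
  destruct (Rmult_neg_cases _ _ Hopp) as [[Hpos Hneg] | [Hneg Hpos]].
  - exact (Hsigns false true Hpos Hneg).
  - exact (Hsigns true false Hpos Hneg).
Qed.

Definition rank2 (a b c d e f : R * R) : tensor :=
  fun x => tprod3 a b c x + tprod3 d e f x.

Definition vdet (u v : R * R) : R := fst u * snd v - snd u * fst v.

Lemma face_det_rank2_12 (a b c d e f : R * R) (k : bool) :
  face_det (rank2 a b c d e f) (face12 k) = (vsel c k * vsel f k) * (vdet a d * vdet b e).
Proof. destruct a, b, c, d, e, f, k; unfold face_det, det2, rank2, vdet; simpl; ring. Qed.

Lemma face_det_rank2_13 (a b c d e f : R * R) (k : bool) :
  face_det (rank2 a b c d e f) (face13 k) = (vsel b k * vsel e k) * (vdet a d * vdet c f).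
Proof. destruct a, b, c, d, e, f, k; unfold face_det, det2, rank2, vdet; simpl; ring. Qed.

Lemma face_det_rank2_23 (a b c d e f : R * R) (k : bool) :
  face_det (rank2 a b c d e f) (face23 k) = (vsel a k * vsel d k) * (vdet b e * vdet c f).
Proof. destruct a, b, c, d, e, f, k; unfold face_det, det2, rank2, vdet; simpl; ring. Qed.

Lemma vsel_nonneg (u : R * R) (k : bool) : nonneg2 u -> 0 <= vsel u k.
Proof. destruct k; unfold nonneg2, vsel; tauto. Qed.

Lemma rank2_nonneg (a b c d e f : R * R) (x : state) :
  nonneg2 a -> nonneg2 b -> nonneg2 c -> nonneg2 d -> nonneg2 e -> nonneg2 f ->
  0 <= rank2 a b c d e f x.
Proof.
  destruct x as [[i j] k]; intros; unfold rank2, tprod3.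
  apply Rplus_le_le_0_compat; repeat apply Rmult_le_pos; apply vsel_nonneg; assumption.
Qed.

Lemma sqr_not_three_negative_pairs (A B C A' B' C' : R) :
  A * B * (A' * B') < 0 -> A * C * (A' * C') < 0 -> B * C * (B' * C') < 0 -> False.
Proof.
  intros HAB HAC HBC.
  assert (Hsq : A * B * (A' * B') * (A * C * (A' * C')) * (B * C * (B' * C'))
                = (A * B * C * (A' * B' * C')) ^ 2) by ring.
  pose proof (pow2_ge_0 (A * B * C * (A' * B' * C'))).
  assert (0 < A * B * (A' * B') * (A * C * (A' * C'))) by (apply Rmult_neg_neg; assumption).
  assert (A * B * (A' * B') * (A * C * (A' * C')) * (B * C * (B' * C')) < 0)
    by (apply Rmult_pos_neg; assumption).
  lra.
Qed.

Lemma RBM32_no_opposite_faces (p : tensor) : RBM32 p ->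
  face_det p (face12 false) * face_det p (face12 true) < 0 ->
  face_det p (face13 false) * face_det p (face13 true) < 0 ->
  face_det p (face23 false) * face_det p (face23 true) < 0 -> False.
Proof.
  intros [_ [a1 [b1 [c1 [d1 [e1 [f1 [a2 [b2 [c2 [d2 [e2 [f2 [Na1 [Nb1 [Nc1 [Nd1
    [Ne1 [Nf1 [Na2 [Nb2 [Nc2 [Nd2 [Ne2 [Nf2 Hp]]]]]]]]]]]]]]]]]]]]]]]]] H12 H13 H23.
  set (q := rank2 a1 b1 c1 d1 e1 f1) in *; set (r := rank2 a2 b2 c2 d2 e2 f2) in *.
  assert (Hq : forall x, 0 <= q x) by (intros; apply rank2_nonneg; assumption).
  assert (Hr : forall x, 0 <= r x) by (intros; apply rank2_nonneg; assumption).
  assert (Hface : forall F, face_det p F = face_det (fun x => q x * r x) F)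
    by (intros; apply face_det_ext, Hp).
  rewrite !Hface in H12, H13, H23.
  apply (sqr_not_three_negative_pairs (vdet a1 d1) (vdet b1 e1) (vdet c1 f1)
           (vdet a2 d2) (vdet b2 e2) (vdet c2 f2)).
  - apply (hadamard_opposite_faces q r face12 (fun k => vsel c1 k * vsel f1 k)
             (fun k => vsel c2 k * vsel f2 k)); auto; intros k;
      first [apply face_det_rank2_12 | apply Rmult_le_pos; apply vsel_nonneg; assumption].
  - apply (hadamard_opposite_faces q r face13 (fun k => vsel b1 k * vsel e1 k)
             (fun k => vsel b2 k * vsel e2 k)); auto; intros k;
      first [apply face_det_rank2_13 | apply Rmult_le_pos; apply vsel_nonneg; assumption].
  - apply (hadamard_opposite_faces q r face23 (fun k => vsel a1 k * vsel d1 k)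
             (fun k => vsel a2 k * vsel d2 k)); auto; intros k;
      first [apply face_det_rank2_23 | apply Rmult_le_pos; apply vsel_nonneg; assumption].
Qed.

Theorem corollary4 :
  ~ (exists (p : tensor) (S : list state),
        RBM32 p /\ NoDup S /\ length S = 4%nat /\
        (forall x, In x S -> forall y, hamming_nb x y -> p x > p y)).
Proof.
  intros [p [S [Hp [HS [Hlen Hmodes]]]]].
  assert (Hnonneg : forall x, 0 <= p x) by apply Hp.
  assert (Hspread : forall x y, In x S -> In y S -> x <> y -> (2 <= hdist x y)%nat).
  { intros x y Hx Hy Hxy.
    destruct (hdist x y) as [|[|n]] eqn:Hd; [| | lia].
    - now apply hdist_eq0 in Hd.
    - exfalso; exact (modes_not_adjacent p x y (Hmodes x Hx) (Hmodes y Hy) Hd). }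
  destruct (spread_four_parity_class S HS Hlen Hspread) as [b Hb].
  assert (Hparity_modes : forall x, parity x = b -> is_mode p x)
    by (intros x Hx; exact (Hmodes x (Hb x Hx))).
  apply (RBM32_no_opposite_faces p Hp);
    apply (opposite_face_dets_of_parity_modes p b); auto;
    intros [] [] []; reflexivity.
Qed.
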